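(* For every sequence $s$, $$\mathsf{Seq}\vdash\forall x\,\Big[x\sqsubseteq\overline{s}\;\leftrightarrow\;\bigvee_{t\in I(s)}x=\overline{t}\Big],$$ where $I(s)$ is the set of all initial segments of $s$.
   Context: $\mathcal{L}=\{e,\vdash,\circ\}$ with $e$ a constant and $\vdash$ (infix), $\circ$ binary function symbols. $\mathsf{Seq}$ is the $\mathcal{L}$-theory with axioms: ($\mathsf{Seq}_1$) $\forall xy[x\vdash y\neq e]$; ($\mathsf{Seq}_2$) $\forall x_1x_2y_1y_2[x_1\vdash x_2=y_1\vdash y_2\rightarrow(x_1=y_1\wedge x_2=y_2)]$; ($\mathsf{Seq}_3$) $\forall x[x\circ e=x]$; ($\mathsf{Seq}_4$) $\forall xyz[x\circ(y\vdash z)=(x\circ y)\vdash z]$; ($\mathsf{Seq}_5$) $\forall x[x=e\vee\exists yz[x=y\vdash z]]$. Sequences: $()$ is a sequence, and for $n>0$, if $s_1,\ldots,s_n$ are sequences then $(s_1,\ldots,s_n)$ is a sequence; the initial segments of $(s_1,\ldots,s_n)$ are $()$ and $(s_1,\ldots,s_k)$ for $1\le k\le n$. The sequeral $\overline{s}$ is the term with $\overline{()}=e$ and $\overline{(s_1,\ldots,s_n)}=(\ldots((e\vdash\overline{s_1})\vdash\overline{s_2})\ldots)\vdash\overline{s_n}$. $x\sqsubseteq t$ abbreviates $\exists y[x\circ y=t]$. *)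

From Stdlib Require Import List Arith.
Import ListNotations.

(* Sequences: () is a sequence; (s_1,...,s_n) with each s_i a sequence.
   [Sq l] represents the sequence whose entries are the elements of [l]
   (so [Sq []] is the empty sequence ()). *)
Inductive sequence : Type := Sq : list sequence -> sequence.

Definition initial_segment (t s : sequence) : Prop :=
  match s with
  | Sq l => exists k, k <= length l /\ t = Sq (firstn k l)
  end.

Record LStructure : Type := {
  carrier :> Type;
  s_e : carrier;
  s_vdash : carrier -> carrier -> carrier;
  s_circ : carrier -> carrier -> carrier
}.

Definition is_Seq_model (M : LStructure) : Prop :=
  (forall x y : M, s_vdash M x y <> s_e M) /\
  (forall x1 x2 y1 y2 : M,
      s_vdash M x1 x2 = s_vdash M y1 y2 -> x1 = y1 /\ x2 = y2) /\
  (forall x : M, s_circ M x (s_e M) = x) /\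
  (forall x y z : M, s_circ M x (s_vdash M y z) = s_vdash M (s_circ M x y) z) /\
  (forall x : M, x = s_e M \/ exists y z, x = s_vdash M y z).

Fixpoint sequeral (M : LStructure) (s : sequence) : M :=
  match s with
  | Sq l => fold_left (fun acc t => s_vdash M acc (sequeral M t)) l (s_e M)
  end.

Definition sqsub (M : LStructure) (x t : M) : Prop :=
  exists y : M, s_circ M x y = t.

(* Read as a list [a_1; ...; a_n] of elements, the sequeral of s is the left-nested term
   e ⊢ a_1 ⊢ ... ⊢ a_n.  The axioms give x ⊑ e <-> x = e and x ⊑ y ⊢ z <-> x = y ⊢ z \/ x ⊑ y
   (write the witness w of x ∘ w = y ⊢ z as e or as w' ⊢ z and use injectivity of ⊢), so
   peeling off the last entry shows that the prefixes of e ⊢ a_1 ⊢ ... ⊢ a_n are exactly the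
   terms built from initial segments of the list. *)

From Stdlib Require Import List Arith Lia.
Import ListNotations.

Section SeqModel.

Variable M : LStructure.

Hypothesis vdash_neq_e : forall x y : M, s_vdash M x y <> s_e M.
Hypothesis vdash_inj : forall x1 x2 y1 y2 : M,
  s_vdash M x1 x2 = s_vdash M y1 y2 -> x1 = y1 /\ x2 = y2.
Hypothesis circ_e : forall x : M, s_circ M x (s_e M) = x.
Hypothesis circ_vdash : forall x y z : M,
  s_circ M x (s_vdash M y z) = s_vdash M (s_circ M x y) z.
Hypothesis e_or_vdash : forall x : M, x = s_e M \/ exists y z, x = s_vdash M y z.

Lemma sqsub_e (x : M) : sqsub M x (s_e M) <-> x = s_e M.
Proof.
  split.
  - intros [w Hw]. destruct (e_or_vdash w) as [-> | (w1 & w2 & ->)].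
    + rewrite circ_e in Hw. exact Hw.
    + rewrite circ_vdash in Hw. destruct (vdash_neq_e _ _ Hw).
  - intros ->. exists (s_e M). apply circ_e.
Qed.

Lemma sqsub_vdash (x y z : M) :
  sqsub M x (s_vdash M y z) <-> x = s_vdash M y z \/ sqsub M x y.
Proof.
  split.
  - intros [w Hw]. destruct (e_or_vdash w) as [-> | (w1 & w2 & ->)].
    + left. rewrite circ_e in Hw. exact Hw.
    + right. rewrite circ_vdash in Hw. exists w1. apply (vdash_inj _ _ _ _ Hw).
  - intros [-> | [w Hw]].
    + exists (s_e M). apply circ_e.
    + exists (s_vdash M w z). rewrite circ_vdash, Hw. reflexivity.
Qed.

Definition vdash_list (l : list M) : M :=
  fold_left (s_vdash M) l (s_e M).

Lemma vdash_list_rcons (l : list M) (a : M) :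
  vdash_list (l ++ [a]) = s_vdash M (vdash_list l) a.
Proof. unfold vdash_list. rewrite fold_left_app. reflexivity. Qed.

Lemma sqsub_vdash_list (l : list M) (x : M) :
  sqsub M x (vdash_list l) <->
  exists k, k <= length l /\ x = vdash_list (firstn k l).
Proof.
  revert x. induction l as [|a l IH] using rev_ind; intro x.
  - rewrite sqsub_e. split.
    + intros ->. exists 0. split; [apply le_n | reflexivity].
    + intros (k & Hk & ->). simpl in Hk. assert (k = 0) as -> by lia. reflexivity.
  - assert (firstn_short : forall k, k <= length l -> firstn k (l ++ [a]) = firstn k l).
    { intros k Hk. rewrite firstn_app.
      replace (k - length l) with 0 by lia. apply app_nil_r. }
    rewrite vdash_list_rcons, sqsub_vdash, IH, length_app. simpl. split.
    + intros [-> | (k & Hk & ->)].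
      * exists (length l + 1). split; [apply le_n |].
        rewrite <- length_app with (l' := [a]), firstn_all, vdash_list_rcons. reflexivity.
      * exists k. split; [lia |]. rewrite firstn_short by exact Hk. reflexivity.
    + intros (k & Hk & ->). destruct (Nat.eq_dec k (length l + 1)) as [-> | Hne].
      * left. rewrite <- length_app with (l' := [a]), firstn_all, vdash_list_rcons. reflexivity.
      * right. exists k. split; [lia |]. rewrite firstn_short by lia. reflexivity.
Qed.

End SeqModel.

Lemma sequeral_Sq (M : LStructure) (l : list sequence) :
  sequeral M (Sq l) = vdash_list M (map (sequeral M) l).
Proof.
  unfold vdash_list. simpl. generalize (s_e M).
  induction l as [|t l IH]; intro acc; simpl; auto.
Qed.

Theorem lemma2 :
  forall (M : LStructure), is_Seq_model M ->
  forall (s : sequence) (x : M),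
    sqsub M x (sequeral M s) <->
    exists t : sequence, initial_segment t s /\ x = sequeral M t.
Proof.
  intros M (Seq1 & Seq2 & Seq3 & Seq4 & Seq5) [l] x.
  rewrite sequeral_Sq, sqsub_vdash_list by assumption. rewrite length_map.
  split.
  - intros (k & Hk & ->). exists (Sq (firstn k l)). split.
    + exists k. auto.
    + rewrite sequeral_Sq, firstn_map. reflexivity.
  - intros (t & (k & Hk & ->) & ->). exists k. split; [exact Hk |].
    rewrite sequeral_Sq, firstn_map. reflexivity.
Qed.
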